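(* Let $G\subset \mathrm{SL}(3,\mathbb{C})$ be a finite abelian group of diagonal matrices. Then $$|G| = 1 + 2 j_G + \sum_{i=1}^3 (n_i - 1).$$
   Context: Each $g\in G$ of order $r$ is uniquely written $g=\mathrm{diag}(e^{2\pi\sqrt{-1}a_1/r},e^{2\pi\sqrt{-1}a_2/r},e^{2\pi\sqrt{-1}a_3/r})$ with integers $0\le a_i<r$. Its age is $\mathrm{age}(g)=\frac1r\sum_{i=1}^3 a_i$, which is an integer since $G\subset\mathrm{SL}(3,\mathbb{C})$. $N_g$ denotes the dimension of the fixed subspace of $g$ in $\mathbb{C}^3$. $j_G$ is the number of $g\in G$ with $\mathrm{age}(g)=1$ and $N_g=0$. For $i=1,2,3$, $K_i$ is the maximal subgroup of $G$ fixing the $i$-th coordinate $x_i$ (i.e. elements whose $i$-th diagonal entry is $1$), and $n_i=|K_i|$. *)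

From HB Require Import structures.
From mathcomp Require Import all_boot all_order all_algebra all_field.
Set Implicit Arguments. Unset Strict Implicit. Unset Printing Implicit Defensive.
Import GRing.Theory Num.Theory.
Local Open Scope ring_scope.

(* e^{2 pi i / r} in algC: r.-root (-1) is the root of -1 of minimal
   nonnegative argument, i.e. e^{i pi / r}; its square is e^{2 pi i / r}. *)
Definition zeta (r : nat) : algC := (r.-root (-1)) ^+ 2.

(* The order of g, computed by searching r = 1 .. N (N a bound, e.g. |G|,
   which bounds the order of any element of the finite group G). *)
Definition mx_order (N : nat) (g : 'M[algC]_3) : nat :=
  (find (fun r => g ^+ r.+1 == 1) (iota 0 N)).+1.

Definition expo (r : nat) (z : algC) : nat :=
  odflt 0%N (omap (@nat_of_ord r) [pick a : 'I_r | zeta r ^+ a == z]).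

Definition age (N : nat) (g : 'M[algC]_3) : rat :=
  let r := mx_order N g in
  (\sum_(i < 3) expo r (g i i))%:R / r%:R.

(* N_g : dimension of the fixed subspace {v | v g = v} of g. *)
Definition fixdim (g : 'M[algC]_3) : nat := \rank (kermx (g - 1)).

Definition diag_SL3_group (G : seq 'M[algC]_3) : bool :=
  [&& uniq G, 1 \in G, all (fun g => all (fun h => g * h \in G) G) G
   & all (fun g => is_diag_mx g && (\det g == 1)) G].

Definition jG (G : seq 'M[algC]_3) : nat :=
  count (fun g => (age (size G) g == 1) && (fixdim g == 0%N)) G.

Definition nK (G : seq 'M[algC]_3) (i : 'I_3) : nat :=
  count (fun g : 'M[algC]_3 => g i i == 1) G.

Set Warnings "-notation-overridden,-ambiguous-paths".
From HB Require Import structures.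
From mathcomp Require Import all_boot all_order all_algebra all_field.
From mathcomp Require Import zify lra.
Set Implicit Arguments. Unset Strict Implicit. Unset Printing Implicit Defensive.
Import Order.TTheory GRing.Theory Num.Theory.
Open Scope ring_scope.

(* Sort the elements g of G by the number of diagonal entries equal to 1.
   Since det g = 1, two such entries force the third, so this number is 3
   (only for g = 1), 1, or 0 (exactly when N_g = 0).  Summing over G,
   sum_i n_i counts 3 for the identity and 1 for each g of the second kind,
   which gives |G| + 2 = sum_i n_i + #{g | N_g = 0}.  Finally g |-> g^-1
   is an involution of {g | N_g = 0} exchanging age 1 and age 2: writing
   g_ii = zeta^a_i with 0 < a_i < r, g^-1 has exponents r - a_i, and
   r | a_1 + a_2 + a_3 < 3r.  Hence #{g | N_g = 0} = 2 j_G.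

   The exponents a_i are only meaningful because zeta r = (r.-root (-1))^2
   is a primitive r-th root of unity.  algC defines r.-root by maximising
   the real part, so the first part of the file proves that a non-trivial
   N-th root of unity of maximal real part is primitive (an elementary
   extremal argument on the unit circle). *)

Lemma unity_norm (N : nat) (x : algC) : (0 < N)%N -> x ^+ N = 1 -> `|x| = 1.
Proof.
move=> N_gt0 xN; apply/eqP; rewrite -(pexpr_eq1 N_gt0) ?normr_ge0 //.
by rewrite -normrX xN normr1.
Qed.

Lemma unit_circle_key (R : realFieldType) (a b p q : R) :
  a ^+ 2 + b ^+ 2 = 1 -> p ^+ 2 + q ^+ 2 = 1 -> a != 1 -> p <= a ->
  p * a - q * b <= p -> p * a + q * b <= p -> False.
Proof.
move=> ab1 pq1 a_neq1 le_pa le_minus le_plus.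
have lt_a1 : a < 1 by rewrite lt_neqAle a_neq1 /=; nra.
have p_ge0 : 0 <= p by nra.
nra.
Qed.

Lemma unit_circle_no_max (x u : algC) : `|x| = 1 -> `|u| = 1 -> x != 1 ->
  'Re u <= 'Re x -> 'Re (u * x) <= 'Re u -> 'Re (u * x^*) <= 'Re u -> False.
Proof.
move=> nx nu x_neq1 le_ux le_mul le_mulc.
have circle (z : algC) : `|z| = 1 -> 'Re z ^+ 2 + 'Im z ^+ 2 = 1.
  by move=> nz; rewrite -normC2_Re_Im nz expr1n.
have Re_x_neq1 : 'Re x != 1.
  apply: contra x_neq1 => /eqP Re_x1.
  have /eqP : 'Im x ^+ 2 = 0.
    by apply: (addrI 1); rewrite addr0 -{1}(expr1n _ 2) -Re_x1 circle.
  by rewrite sqrf_eq0 => /eqP Im_x0; rewrite [x]Crect Re_x1 Im_x0 mulr0 addr0.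
rewrite ReM in le_mul; rewrite ReM Re_conj Im_conj mulrN opprK in le_mulc.
pose a := in_algR (Creal_Re x); pose b := in_algR (Creal_Im x).
pose p := in_algR (Creal_Re u); pose q := in_algR (Creal_Im u).
have val_inj_R : injective algRval := val_inj.
apply: (@unit_circle_key _ a b p q).
- by apply: val_inj_R; rewrite /= circle.
- by apply: val_inj_R; rewrite /= circle.
- by rewrite -(inj_eq val_inj_R).
- exact: le_ux.
- exact: le_mul.
- exact: le_mulc.
Qed.

Lemma unit_circle_Re_eq (x y : algC) : `|x| = 1 -> `|y| = 1 ->
  'Re y = 'Re x -> y = x \/ y = x^*.
Proof.
move=> nx ny Re_yx.
have : 'Im y ^+ 2 == 'Im x ^+ 2.
  by rewrite -(inj_eq (addrI ('Re x ^+ 2))) -{1}Re_yx -!normC2_Re_Im nx ny.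
rewrite eqf_sqr => /orP [] /eqP Im_yx; [left | right].
  by rewrite [y]Crect [x]Crect Re_yx Im_yx.
by rewrite [y]Crect [x^*]Crect Re_conj Im_conj Re_yx Im_yx.
Qed.

(* A finite non-empty family of complex numbers has a member of maximal real
   part; the real parts are totally ordered although algC is not. *)
Lemma Re_argmax (I : finType) (P : pred I) (F : I -> algC) (i0 : I) : P i0 ->
  exists2 i, P i & forall j, P j -> 'Re (F j) <= 'Re (F i).
Proof.
move=> Pi0; pose ord (a b : algC) := 'Re b <= 'Re a.
have ord_refl : reflexive ord by move=> a; rewrite /ord.
have ord_trans : transitive ord by move=> a b c /= ba cb; apply: le_trans cb ba.
have ord_total : total ord by move=> a b; apply: real_leVge; apply: Creal_Re.
have [i Pi max_i] := extremumP F ord_refl ord_trans ord_total Pi0.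
by exists i.
Qed.

Definition maxRe_unity (N : nat) (x : algC) : Prop :=
  [/\ x ^+ N = 1, x != 1 & forall z, z ^+ N = 1 -> z != 1 -> 'Re z <= 'Re x].

(* Such roots exist as soon as N > 1: maximise over the non-trivial powers of
   a primitive N-th root of unity. *)
Lemma maxRe_unity_exists (N : nat) : (1 < N)%N -> exists x, maxRe_unity N x.
Proof.
move=> N_gt1; have N_gt0 := ltnW N_gt1.
have [w pw] := C_prim_root_exists N_gt0.
have [k k_neq0 max_k] :=
  @Re_argmax 'I_N (fun k => k != 0 :> nat) (fun k : 'I_N => w ^+ k) (Ordinal N_gt1) isT.
exists (w ^+ k); split.
- by rewrite exprAC (prim_expr_order pw) expr1n.
- by rewrite -(prim_order_dvd pw) /dvdn modn_small.
- move=> z zN; have [j ->] := prim_rootP pw zN => wj_neq1; apply: max_k.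
  by apply: contra wj_neq1 => /eqP ->.
Qed.

Lemma maxRe_unity_conj (N : nat) (x : algC) : maxRe_unity N x -> maxRe_unity N x^*.
Proof.
case=> xN x_neq1 max_x; split; last by rewrite Re_conj.
- by rewrite -rmorphXn xN rmorph1.
- by apply: contra x_neq1 => /eqP x1; rewrite -[x]conjCK x1 rmorph1.
Qed.

(* A non-trivial N-th root of unity of maximal real part is primitive:
   otherwise some coset w <x> avoids 1, and its element u of maximal real
   part contradicts [unit_circle_no_max]. *)
Lemma maxRe_unity_prim (N : nat) (x : algC) : (1 < N)%N -> maxRe_unity N x ->
  N.-primitive_root x.
Proof.
move=> N_gt1 [xN x_neq1 max_x]; have N_gt0 := ltnW N_gt1.
have [m prim_m m_dvdN] := prim_order_exists N_gt0 xN.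
have [<- // | m_neqN] := eqVneq m N; exfalso.
have m_gt0 := prim_order_gt0 prim_m; have xm := prim_expr_order prim_m.
have [w pw] := C_prim_root_exists N_gt0.
have wm_neq1 : w ^+ m != 1.
  rewrite -(prim_order_dvd pw); apply: contra m_neqN => /(dvdn_leq m_gt0) le_Nm.
  by rewrite eqn_leq le_Nm (dvdn_leq N_gt0 m_dvdN).
have [k _ max_k] := @Re_argmax 'I_m predT (fun k : 'I_m => w * x ^+ k) (Ordinal m_gt0) isT.
set u := w * x ^+ k in max_k.
have nx := unity_norm N_gt0 xN.
have uN : u ^+ N = 1 by rewrite exprMn prim_expr_order // exprAC xN expr1n mulr1.
have u_neq1 : u != 1.
  apply: contra wm_neq1 => /eqP u1.
  have <- : (x ^+ k)^-1 = w by apply: mulr1_eq; rewrite mulrC.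
  by rewrite exprVn -exprM mulnC exprM xm expr1n invr1.
have x_inv : x^-1 = x ^+ m.-1 by apply: mulr1_eq; rewrite -exprS prednK.
apply: (unit_circle_no_max nx (unity_norm N_gt0 uN) x_neq1 (max_x u uN u_neq1)).
- have := max_k (Ordinal (ltn_pmod k.+1 m_gt0)) isT; rewrite /= prim_expr_mod //.
  by rewrite exprS mulrCA mulrC.
- have := max_k (Ordinal (ltn_pmod (k + m.-1) m_gt0)) isT; rewrite /= prim_expr_mod //.
  by rewrite exprD mulrA -x_inv invC_norm nx expr1n invr1 mul1r.
Qed.

(* Take x of maximal real part
   among the non-trivial 2r-th roots of unity with Im x >= 0; x is primitive,
   so x ^+ r = -1.  By the definition of r.-root, y := r.-root (-1) then has
   the same real part as x, so y is x or x^*, a primitive 2r-th root of unity,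
   and zeta r = y ^+ 2 is a primitive r-th root of unity. *)
Lemma zeta_prim (r : nat) : (0 < r)%N -> r.-primitive_root (zeta r).
Proof.
move=> r_gt0; set N := (r * 2)%N.
have N_gt1 : (1 < N)%N by rewrite /N; lia.
have N_gt0 := ltnW N_gt1.
have [x [max_x Im_x]] : exists x, maxRe_unity N x /\ 0 <= 'Im x.
  have [x0 max_x0] := maxRe_unity_exists N_gt1.
  have [Im_x0 | Im_x0] := boolP (0 <= 'Im x0); first by exists x0.
  exists x0^*; split; first exact: maxRe_unity_conj.
  by rewrite Im_conj oppr_ge0 ltW // real_ltNge ?Creal_Im.
have prim_x := maxRe_unity_prim N_gt1 max_x.
have xr : x ^+ r = -1.
  have /eqP : (x ^+ r) ^+ 2 = 1 by rewrite -exprM (prim_expr_order prim_x).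
  rewrite sqrf_eq1 -(prim_order_dvd prim_x) => /orP [|/eqP //].
  by move/(dvdn_leq r_gt0); rewrite /N; lia.
pose y : algC := r.-root (-1).
have yr : y ^+ r = -1 by rewrite rootCK.
have yN : y ^+ N = 1 by rewrite exprM yr sqrrN expr1n.
have y_neq1 : y != 1.
  apply/eqP => y1; move: yr; rewrite y1 expr1n => /eqP.
  by rewrite gt_eqF // (lt_trans (ltrN10 _) ltr01).
have Re_yx : 'Re y = 'Re x.
  case: max_x => _ _ max_x; apply/eqP; rewrite eq_le max_x //.
  exact: rootC_Re_max.
have half_N : (N %/ r = 2)%N by rewrite /N mulKn.
have -> : zeta r = y ^+ (N %/ r) by rewrite half_N.
have [-> | ->] := unit_circle_Re_eq (unity_norm N_gt0 (prim_expr_order prim_x))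
  (unity_norm N_gt0 yN) Re_yx.
all: apply: dvdn_prim_root; last by rewrite /N dvdn_mulr.
- exact: prim_x.
- exact: maxRe_unity_prim N_gt1 (maxRe_unity_conj max_x).
Qed.

Lemma expo_eq (r a : nat) (z : algC) : (0 < r)%N -> (a < r)%N -> zeta r ^+ a = z ->
  expo r z = a.
Proof.
move=> r_gt0 a_lt_r za; have prim_z := zeta_prim r_gt0.
rewrite /expo; case: pickP => [b /eqP zb | no_b] /=; last first.
  by have := no_b (Ordinal a_lt_r); rewrite /= za eqxx.
apply/eqP; rewrite -(modn_small a_lt_r) -(modn_small (ltn_ord b)).
by rewrite -(eq_prim_root_expr prim_z) zb za.
Qed.

Lemma expo_spec (r : nat) (z : algC) : (0 < r)%N -> z ^+ r = 1 ->
  zeta r ^+ expo r z = z /\ (expo r z < r)%N.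
Proof.
move=> r_gt0 zr; have [i ->] := prim_rootP (zeta_prim r_gt0) zr.
by rewrite (expo_eq r_gt0 (ltn_ord i) erefl).
Qed.

Lemma expo_gt0 (r : nat) (z : algC) : (0 < r)%N -> z ^+ r = 1 -> z != 1 ->
  (0 < expo r z)%N.
Proof.
move=> r_gt0 zr z_neq1; have [za _] := expo_spec r_gt0 zr.
by rewrite lt0n; apply: contra z_neq1 => /eqP a0; rewrite -za a0.
Qed.

Lemma expr_order_inv (R : unitRingType) (x : R) (r : nat) : (0 < r)%N -> x ^+ r = 1 ->
  x^-1 = x ^+ r.-1.
Proof.
move=> r_gt0 xr; have x_unit : x \is a GRing.unit.
  by apply/unitrP; exists (x ^+ r.-1); rewrite -exprS -exprSr prednK.
by rewrite -[RHS](mulKr x_unit) -exprS prednK // xr mulr1.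
Qed.

Lemma expo_inv (r : nat) (z : algC) : (0 < r)%N -> z ^+ r = 1 -> z != 1 ->
  expo r z^-1 = (r - expo r z)%N.
Proof.
move=> r_gt0 zr z_neq1; have [za a_lt_r] := expo_spec r_gt0 zr.
have a_gt0 := expo_gt0 r_gt0 zr z_neq1.
apply: expo_eq => //; first by rewrite ltn_subrL a_gt0 r_gt0.
rewrite -{2}za; apply/esym/mulr1_eq.
by rewrite -exprD subnKC ?(ltnW a_lt_r) // (prim_expr_order (zeta_prim r_gt0)).
Qed.

Lemma diag_mulmx_entry (R : pzSemiRingType) (n : nat) (A B : 'M[R]_n) (i : 'I_n) :
  is_diag_mx A -> (A *m B) i i = A i i * B i i.
Proof.
move=> /is_diag_mxP A_diag; rewrite mxE (bigD1 i) //= big1 ?addr0 // => j j_neq_i.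
by rewrite A_diag ?mul0r // eq_sym.
Qed.

Lemma diag_expr_entry (R : pzSemiRingType) (n : nat) (A : 'M[R]_n.+1) (k : nat) (i : 'I_n.+1) :
  is_diag_mx A -> (A ^+ k) i i = A i i ^+ k.
Proof.
move=> A_diag; elim: k => [|k IHk]; first by rewrite !expr0 mxE eqxx.
by rewrite !exprS -mulmxE diag_mulmx_entry // IHk.
Qed.

Lemma det_is_diag (R : comPzRingType) (n : nat) (A : 'M[R]_n) :
  is_diag_mx A -> \det A = \prod_i A i i.
Proof.
move=> /is_diag_mxP A_diag.
have A_eq : A = diag_mx (\row_i A i i).
  apply/matrixP => i j; rewrite !mxE; have [<-|j_neq_i] := eqVneq i j; first by rewrite mulr1n.
  by rewrite A_diag ?mulr0n.
by rewrite {1}A_eq det_diag; apply: eq_bigr => i _; rewrite mxE.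
Qed.

Lemma fixdim_eq0 (g : 'M[algC]_3) :
  is_diag_mx g -> (fixdim g == 0%N) = [forall i, g i i != 1].
Proof.
move=> /is_diag_mxP g_diag.
have g1_diag : is_diag_mx (g - 1).
  apply/is_diag_mxP => i j j_neq_i; rewrite !mxE g_diag //.
  by rewrite (_ : (i == j) = false) ?subr0 //; apply/negbTE.
rewrite /fixdim mxrank_eq0 kermx_eq0 row_free_unit unitmxE unitfE det_is_diag //.
have entry i : (g - 1) i i != 0 = (g i i != 1) by rewrite !mxE eqxx subr_eq0.
by apply/prodf_neq0/forallP => [nz i | ne1 i _]; [rewrite -entry nz | rewrite entry ne1].
Qed.

(* Counting identity for three entries of product 1: two of them equal to 1
   force the third, so the number of entries equal to 1 is 3, 1 or 0, and
   1 + 2 [all are 1] equals that number plus [none is 1]. *)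
Lemma unit_count_identity (R : pzSemiRingType) (d : 'I_3 -> R) : \prod_i d i = 1 ->
  (1 + 2 * [forall i, d i == 1%R] = \sum_i (d i == 1%R) + [forall i, d i != 1%R])%N.
Proof.
rewrite -!(big_andE xpredT) !big_ord_recl !big_ord0 mulr1 !andbT.
move: (d _) (d _) (d _) => a b c; rewrite -!/(_ == 1) => abc.
have force_a : (b == 1) ==> (c == 1) ==> (a == 1).
  apply/implyP => /eqP b1; apply/implyP => /eqP c1.
  by move: abc; rewrite b1 c1 !mul1r => ->.
have force_b : (a == 1) ==> (c == 1) ==> (b == 1).
  apply/implyP => /eqP a1; apply/implyP => /eqP c1.
  by move: abc; rewrite a1 c1 mul1r mulr1 => ->.
have force_c : (a == 1) ==> (b == 1) ==> (c == 1).
  apply/implyP => /eqP a1; apply/implyP => /eqP b1.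
  by move: abc; rewrite a1 b1 !mulr1 => ->.
by move: force_a force_b force_c; case: (a == 1); case: (b == 1); case: (c == 1).
Qed.

Lemma complement_sum_eq (r : nat) (a : 'I_3 -> nat) : (forall i, 0 < a i < r)%N ->
  (r %| \sum_i a i)%N -> (\sum_i (r - a i) == r)%N = (\sum_i a i != r)%N.
Proof.
move=> a_bounds; rewrite !big_ord_recl !big_ord0 !addn0.
have := a_bounds ord0; have := a_bounds (lift ord0 ord0).
have := a_bounds (lift ord0 (lift ord0 ord0)).
move: (a _) (a _) (a _) => x y z /andP [x0 xr] /andP [y0 yr] /andP [z0 zr] /dvdnP [q sum_q].
have q12 : (q = 1 \/ q = 2)%N by nia.
rewrite sum_q; case: q12 => q_eq; subst q.
all: by case: eqP => lhs; case: eqP => rhs //=; exfalso; lia.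
Qed.

Lemma count_as_sum (T : Type) (a : pred T) (s : seq T) : count a s = (\sum_(x <- s) a x)%N.
Proof. by rewrite -sum1_count big_mkcond. Qed.

Lemma mx_order_inv (M : nat) (g : 'M[algC]_3) : mx_order M g^-1 = mx_order M g.
Proof. by rewrite /mx_order; congr _.+1; apply: eq_find => r; rewrite exprVn invr_eq1. Qed.

Lemma ratio_eq1 (n r : nat) : (0 < r)%N -> ((n%:R / r%:R : rat) == 1) = (n == r).
Proof.
move=> r_gt0; have r_neq0 : (r%:R : rat) != 0 by rewrite pnatr_eq0 -lt0n.
by rewrite -(inj_eq (mulIf r_neq0)) mulfVK // mul1r eqr_nat.
Qed.

Definition fixed_coords (g : 'M[algC]_3) : nat := (\sum_(i < 3) (g i i == 1%R))%N.

Section DiagonalSL3Group.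

Variable G : seq 'M[algC]_3.
Hypothesis G_group : diag_SL3_group G.
Local Notation N := (size G).

Lemma G_uniq : uniq G.
Proof. by case/and4P: G_group. Qed.

Lemma G_one : 1 \in G.
Proof. by case/and4P: G_group. Qed.

Lemma G_mul (g h : 'M[algC]_3) : g \in G -> h \in G -> g * h \in G.
Proof.
by case/and4P: G_group => _ _ /allP G_closed _ gG hG; apply: (allP (G_closed g gG)).
Qed.

Lemma G_diag (g : 'M[algC]_3) : g \in G -> is_diag_mx g.
Proof. by case/and4P: G_group => _ _ _ /allP G_SL gG; case/andP: (G_SL g gG). Qed.

Lemma G_det (g : 'M[algC]_3) : g \in G -> \det g = 1.
Proof. by case/and4P: G_group => _ _ _ /allP G_SL gG; case/andP: (G_SL g gG) => _ /eqP. Qed.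

Lemma G_expr (g : 'M[algC]_3) (k : nat) : g \in G -> g ^+ k \in G.
Proof. by move=> gG; elim: k => [|k IHk]; rewrite ?expr0 ?G_one // exprS G_mul. Qed.

(* Pigeonhole: among g, ..., g ^+ N.+1 two powers coincide, so g has order
   at most N = |G|; hence [mx_order N] computes the order of g. *)
Lemma G_finite_order (g : 'M[algC]_3) : g \in G -> exists2 s, (0 < s <= N)%N & g ^+ s = 1.
Proof.
move=> gG; pose powers := mkseq (fun k => g ^+ k.+1) N.+1.
have : ~~ uniq powers.
  apply/negP => powers_uniq.
  have sub : {subset powers <= G} by move=> x /mapP [k _ ->]; exact: G_expr.
  by have := uniq_leq_size powers_uniq sub; rewrite size_mkseq ltnn.
case/(uniqPn 0) => i [j [lt_ij lt_j]]; rewrite size_mkseq in lt_j.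
rewrite !nth_mkseq ?(ltn_trans lt_ij) // => gij.
exists (j - i)%N; first by apply/andP; split; [rewrite subn_gt0 | lia].
have g_unit : g \is a GRing.unit by rewrite unitmxE G_det ?unitr1.
apply: (mulrI (unitrX i.+1 g_unit)); rewrite mulr1 -exprD gij.
by congr (g ^+ _); lia.
Qed.

Lemma mx_order_exp (g : 'M[algC]_3) : g \in G -> g ^+ mx_order N g = 1.
Proof.
move=> gG; have [s /andP [s_gt0 s_le] gs] := G_finite_order gG.
pose P r := g ^+ r.+1 == 1.
have has_P : has P (iota 0 N).
  by apply/hasP; exists s.-1; [rewrite mem_iota; lia | rewrite /P prednK // gs].
have := nth_find 0 has_P; rewrite nth_iota ?add0n => [/eqP // |].
by move: has_P; rewrite has_find size_iota.
Qed.

Lemma G_inv (g : 'M[algC]_3) : g \in G -> g^-1 \in G.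
Proof. by move=> gG; rewrite (expr_order_inv _ (mx_order_exp gG)) ?G_expr. Qed.

Lemma entry_unity (g : 'M[algC]_3) (i : 'I_3) : g \in G -> g i i ^+ mx_order N g = 1.
Proof. by move=> gG; rewrite -diag_expr_entry ?G_diag // mx_order_exp // mxE eqxx. Qed.

Lemma inv_entry (g : 'M[algC]_3) (i : 'I_3) : g \in G -> g^-1 i i = (g i i)^-1.
Proof.
move=> gG; rewrite (expr_order_inv _ (mx_order_exp gG)) // diag_expr_entry ?G_diag //.
by rewrite (expr_order_inv _ (entry_unity i gG)).
Qed.

(* det g = 1 makes the exponent sum of g a multiple of the order of g. *)
Lemma expo_sum_dvd (g : 'M[algC]_3) : g \in G ->
  (mx_order N g %| \sum_i expo (mx_order N g) (g i i))%N.
Proof.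
move=> gG; rewrite (prim_order_dvd (zeta_prim (isT : (0 < mx_order N g)%N))) -prodrXr.
under eq_bigr => i _ do rewrite (expo_spec _ (entry_unity i gG)).1 //.
by rewrite -det_is_diag ?G_diag // G_det.
Qed.

Lemma fixdim_inv (g : 'M[algC]_3) : g \in G -> (fixdim g^-1 == 0%N) = (fixdim g == 0%N).
Proof.
move=> gG; rewrite !fixdim_eq0 ?G_diag ?G_inv //.
by apply: eq_forallb => i; rewrite inv_entry // invr_eq1.
Qed.

Lemma age_inv_pairing (g : 'M[algC]_3) : g \in G -> fixdim g == 0%N ->
  (age N g^-1 == 1) = (age N g != 1).
Proof.
move=> gG; rewrite fixdim_eq0 ?G_diag // => /forallP entries_neq1.
set r := mx_order N g; have r_gt0 : (0 < r)%N by [].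
have a_bounds i : (0 < expo r (g i i) < r)%N.
  by rewrite expo_gt0 ?entries_neq1 ?entry_unity ?(expo_spec r_gt0 (entry_unity i gG)).2.
rewrite /age mx_order_inv -/r !ratio_eq1 //.
under eq_bigr => i _ do rewrite inv_entry // expo_inv ?entries_neq1 ?entry_unity //.
exact: complement_sum_eq (expo_sum_dvd gG).
Qed.

Lemma fixed_coords_spec (g : 'M[algC]_3) : g \in G ->
  (1 + 2 * (g == 1%R) = fixed_coords g + (fixdim g == 0))%N.
Proof.
move=> gG; have g_diag := G_diag gG.
have -> : (g == 1) = [forall i, g i i == 1].
  apply/eqP/forallP => [-> i | entries_eq1]; first by rewrite mxE eqxx.
  apply/matrixP => i j; rewrite !mxE; have [<- | j_neq_i] := eqVneq i j.
    by rewrite (eqP (entries_eq1 i)).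
  by rewrite (is_diag_mxP g_diag) // (negbTE j_neq_i).
rewrite fixdim_eq0 //; apply: unit_count_identity.
by rewrite -det_is_diag // G_det.
Qed.

(* Inversion pairs off the elements with N_g = 0: their number is 2 j_G. *)
Lemma count_fixdim0 : count (fun g => fixdim g == 0%N) G = (2 * jG G)%N.
Proof.
pose A1 h := (age N h == 1) && (fixdim h == 0%N).
have inv_perm : perm_eq (map GRing.inv G) G.
  apply: uniq_perm; rewrite ?map_inj_uniq ?G_uniq //; first exact: invr_inj.
  move=> h; apply/mapP/idP => [[g gG ->] | hG]; first exact: G_inv.
  by exists h^-1; rewrite ?invrK ?G_inv.
have split_count :
    count (fun g => fixdim g == 0%N) G = (count A1 G + count (A1 \o GRing.inv) G)%N.
  rewrite !count_as_sum -big_split /=; apply: eq_big_seq => g gG.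
  rewrite /A1 fixdim_inv //; case fix0 : (fixdim g == 0%N); rewrite ?andbF //=.
  by rewrite age_inv_pairing //; case: (age N g == 1).
by rewrite split_count -count_map (permP inv_perm) addnn mul2n.
Qed.

Lemma sum_nK : (\sum_i nK G i = \sum_(g <- G) fixed_coords g)%N.
Proof.
rewrite /nK /fixed_coords; under eq_bigr => i _ do rewrite count_as_sum.
exact: exchange_big.
Qed.

Lemma nK_gt0 (i : 'I_3) : (0 < nK G i)%N.
Proof. by rewrite -has_count; apply/hasP; exists 1; rewrite ?G_one // mxE eqxx. Qed.

Lemma size_count_identity : (size G + 2 = \sum_i nK G i + 2 * jG G)%N.
Proof.
have one_count : count (pred1 1) G = 1%N by rewrite count_uniq_mem ?G_uniq ?G_one.
have -> : (size G + 2 = \sum_(g <- G) (1 + 2 * (g == 1%R)))%N.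
  by rewrite big_split /= sum1_size -big_distrr /= -count_as_sum one_count.
rewrite sum_nK -count_fixdim0 count_as_sum -big_split /=.
by apply: eq_big_seq => g gG; exact: fixed_coords_spec.
Qed.

End DiagonalSL3Group.

Close Scope ring_scope.

Theorem proposition1 (G : seq 'M[algC]_3) :
  diag_SL3_group G ->
  size G = (1 + 2 * jG G + \sum_(i < 3) (nK G i - 1))%N.
Proof.
move=> G_group; have identity := size_count_identity G_group.
have nK_pos := nK_gt0 G_group.
rewrite !big_ord_recl !big_ord0 in identity *.
have := nK_pos ord0; have := nK_pos (lift ord0 ord0).
have := nK_pos (lift ord0 (lift ord0 ord0)).
lia.
Qed.
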